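(* Let $n,m,k,r$ be positive integers. Then \[S_{\leq m}(n,k,r)=\sum_{i=0}^{m-1}\binom{n-1}{i}\Big((k-1)\,S_{\leq m}(n-i-1,k-1,r)+S_{\leq m}(n-i-1,k,r-1)\Big),\] where summands with $i>n-1$ (for which $\binom{n-1}{i}=0$) are $0$, and when $k=1$ the term $(k-1)S_{\leq m}(n-i-1,k-1,r)$ is $0$.
   Context: For integers $N\ge 0$, $k\ge1$, $r\ge 0$, $m\ge1$, $S_{\leq m}(N,k,r)$ is the number of ways to partition $[N]=\{1,\dots,N\}$ into $r+k-1$ non-empty blocks, each of size at most $m$, where $r$ of the blocks receive the label $1$ (blocks with label $1$ are indistinguishable among themselves) and the remaining $k-1$ blocks receive the distinct labels $2,3,\dots,k$. (In particular $S_{\leq m}(0,1,0)=1$.) *)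

From mathcomp Require Import all_boot.
Unset Printing Implicit Defensive.

(* A labelled bounded partition of [N] = 'I_N with parameters k, r, m is a pair
   (P, g) where P is a set partition of 'I_N into r + (k-1) nonempty blocks, each
   of size at most m, and g : 'I_(k-1) -> blocks is an injective assignment of
   the distinct labels 2..k (label j+2 given to block g j); the remaining r
   blocks receive the (indistinguishable) label 1. *)
Definition labelled_bpart (m N k r : nat)
  (x : {set {set 'I_N}} * {ffun 'I_(k.-1) -> {set 'I_N}}) : bool :=
  let P := x.1 in let g := x.2 in
  [&& partition P [set: 'I_N],
      [forall B in P, #|B| <= m],
      #|P| == r + k.-1,
      injectiveb g &
      [forall j, g j \in P]].

Definition Sm (m N k r : nat) : nat := #|[pred x | @labelled_bpart m N k r x]|.

From mathcomp Require Import all_boot.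

Set Implicit Arguments.
Unset Strict Implicit.
Unset Printing Implicit Defensive.

(* Forgetting the labels, a labelled bounded partition is a partition of [N]
   into t = r + k - 1 blocks of size at most m together with an injective
   labelling of k - 1 of its blocks, so S_{<=m}(N, k, r) = p(N, t) * t^_(k-1)
   where p(N, t) counts the bare bounded partitions.  Removing the block of a
   fixed point gives p(n, t + 1) = sum_i C(n - 1, i) p(n - 1 - i, t), and the
   rule (t + 1)^_(k-1) = t^_(k-1) + (k - 1) t^_(k-2) splits this sum into the
   two terms of the recurrence. *)

Section SumsOverSubsets.

Variable T : finType.

Lemma sum_subsets_by_card (D : {set T}) n (F : nat -> nat) :
  \sum_(A : {set T} | (A \subset D) && (#|A| < n)) F #|A| =
    \sum_(i < n) 'C(#|D|, i) * F i.
Proof.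
elim: n => [|n IHn]; first by rewrite big_ord0 big_pred0 // => A; rewrite andbF.
rewrite big_ord_recr -IHn /= (bigID (fun A : {set T} => #|A| < n)) /=.
congr (_ + _).
  apply: eq_bigl => A; rewrite -andbA; congr (_ && _).
  by apply/andP/idP => [[] | ltAn] //; rewrite ltnW.
rewrite -cards_draws -sum1dep_card big_distrl /=.
apply: eq_big => [A | A /andP[/andP[_ leAn] geAn]].
  by rewrite ltnS -leqNgt -andbA -eqn_leq.
by rewrite mul1n; congr F; apply/eqP; rewrite eqn_leq -ltnS leAn leqNgt.
Qed.

Lemma sum_blocks_by_card (D : {set T}) x0 n (F : nat -> nat) : x0 \in D ->
  \sum_(B : {set T} | [&& x0 \in B, B \subset D & #|B| <= n]) F #|B| =
    \sum_(i < n) 'C(#|D|.-1, i) * F i.+1.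
Proof.
move=> x0D; rewrite (cardsD1 x0 D) x0D add1n /=.
rewrite -(sum_subsets_by_card _ _ (fun s => F s.+1)).
rewrite (reindex_onto (fun A => x0 |: A) (fun B => B :\ x0)) /=; last first.
  by move=> B /andP[x0B _]; apply: setD1K.
apply: eq_big => [A | A /andP[_ /eqP defA]]; last first.
  by rewrite cardsU1 -defA setD11.
rewrite setU11 subsetD1 subUset sub1set x0D /=.
case: (boolP (x0 \in A)) => [x0A | x0nA] /=; last first.
  by rewrite setU1K // cardsU1 x0nA add1n eqxx !andbT.
have -> : ((x0 |: A) :\ x0 == A) = false.
  by apply: contraTF x0A => /eqP <-; rewrite setD11.
by rewrite !andbF.
Qed.

End SumsOverSubsets.

Section BoundedPartitions.

Variables (T : finType) (m : nat).
Implicit Types (D B : {set T}) (P : {set {set T}}).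

Definition bpartition D (t : nat) P : bool :=
  [&& partition P D, [forall B in P, #|B| <= m] & #|P| == t].

Definition npartitions D (t : nat) : nat := #|[set P | bpartition D t P]|.

Lemma partition_setD_notin P D B :
  partition P (D :\: B) -> B != set0 -> B \notin P.
Proof.
move=> partP; apply: contraNN => BP; have := partitionS partP BP.
by rewrite subsetD -setI_eq0 setIid => /andP[].
Qed.

Lemma bpartition_setD1 D t P B :
  bpartition D t.+1 P -> B \in P -> bpartition (D :\: B) t (P :\ B).
Proof.
case/and3P=> partP leP /eqP cardP BP; rewrite /bpartition partitionD1 //=.
apply/andP; split; first by apply/forall_inP=> C /setD1P[_ /(forall_inP leP)].
by move: cardP; rewrite (cardsD1 B) BP add1n => -[->].
Qed.

Lemma bpartition_setU1 D t P B : bpartition (D :\: B) t P ->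
  B \subset D -> B != set0 -> #|B| <= m -> bpartition D t.+1 (B |: P).
Proof.
case/and3P=> partP leP /eqP cardP BD B0 leB.
have BDB : [disjoint B & D :\: B].
  by rewrite -setI_eq0 setDE setICA setICr setI0.
have := partitionU1 partP B0 BDB.
rewrite -{2}(setID D B) (setIidPr BD) /bpartition => ->.
rewrite cardsU1 (partition_setD_notin partP B0) cardP eqxx andbT /=.
by apply/forall_inP=> C /setU1P[-> // | /(forall_inP leP)].
Qed.

Lemma npartitions_set0 t : npartitions set0 t = (t == 0).
Proof.
rewrite /npartitions; case: t => [|t] /=.
  rewrite -(cards1 (set0 : {set {set T}})); apply: eq_card => P.
  rewrite !inE /bpartition partition_set0; case: eqP => [-> | _] //=.
  by rewrite cards0 andbT; apply/forall_inP => B; rewrite inE.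
apply/eqP; rewrite cards_eq0; apply/eqP/setP => P.
rewrite !inE /bpartition partition_set0.
by case: eqP => [-> | _] //=; rewrite cards0 andbF.
Qed.

Lemma npartitions0 D : D != set0 -> npartitions D 0 = 0.
Proof.
move=> D0; apply/eqP; rewrite cards_eq0; apply/eqP/setP => P.
rewrite !inE /bpartition cards_eq0; apply/negbTE/and3P => -[partP _ /eqP P0].
by rewrite -(cover_partition partP) P0 /cover big_set0 eqxx in D0.
Qed.

Lemma npartitionsS D x0 t : x0 \in D ->
  npartitions D t.+1 =
    \sum_(B : {set T} | [&& x0 \in B, B \subset D & #|B| <= m])
      npartitions (D :\: B) t.
Proof.
move=> x0D; rewrite /npartitions -sum1dep_card.
rewrite (partition_big (pblock^~ x0)
  (fun B : {set T} => [&& x0 \in B, B \subset D & #|B| <= m])) /=; last first.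
  move=> P /and3P[partP leP _].
  have x0P : x0 \in cover P by rewrite (cover_partition partP).
  by rewrite mem_pblock x0P (partitionS partP) ?(forall_inP leP) ?pblock_mem.
apply: eq_bigr => B /and3P[x0B BD leB]; rewrite -sum1dep_card.
rewrite (reindex_onto (fun P => B |: P) (fun P => P :\ B)) /=; last first.
  move=> P /andP[/and3P[partP _ _] /eqP <-]; apply/setD1K/pblock_mem.
  by rewrite (cover_partition partP).
have B0 : B != set0 by apply/set0Pn; exists x0.
apply: eq_bigl => P; apply/idP/idP => [/andP[/andP[bP _] /eqP <-] | bP].
  exact: bpartition_setD1 bP (setU11 _ _).
have /and3P[partP _ _] := bP; have BnP := partition_setD_notin partP B0.
have /and3P[partBP _ _] := bpartition_setU1 bP BD B0 leB.
rewrite bpartition_setU1 // setU1K // eqxx andbT /=.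
by rewrite (def_pblock (partition_trivIset partBP) (setU11 _ _) x0B).
Qed.

End BoundedPartitions.

Lemma eq_npartitions (T T' : finType) m (D : {set T}) (D' : {set T'}) t :
  #|D| = #|D'| -> npartitions m D t = npartitions m D' t.
Proof.
have [n] := ubnP #|D|; elim: n => // n IHn in T T' D D' t *.
rewrite ltnS => leDn eqDD'.
have [D0 | [x0 x0D]] := set_0Vmem D.
  have D'0 : D' = set0 by apply/eqP; rewrite -cards_eq0 -eqDD' D0 cards0.
  by rewrite D0 D'0 !npartitions_set0.
have Dn0 : D != set0 by apply/set0Pn; exists x0.
have D'n0 : D' != set0 by rewrite -card_gt0 -eqDD' card_gt0.
have /set0Pn[y0 y0D'] := D'n0.
case: t => [|t]; first by rewrite !npartitions0.
pose F s := npartitions m [set: 'I_(#|D| - s)] t.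
have expand (U : finType) (E : {set U}) z0 : z0 \in E -> #|E| = #|D| ->
    npartitions m E t.+1 = \sum_(i < m) 'C(#|D|.-1, i) * F i.+1.
  move=> z0E eqED.
  rewrite (npartitionsS _ _ z0E) -eqED -(sum_blocks_by_card _ F z0E).
  apply: eq_bigr => B /and3P[z0B BE _]; have cardEB := cardsD E B.
  rewrite (setIidPr BE) eqED in cardEB.
  apply: IHn; last by rewrite cardsT card_ord.
  have B0 : 0 < #|B| by rewrite card_gt0; apply/set0Pn; exists z0.
  rewrite cardEB (leq_trans _ leDn) // ltn_subrL B0 (leq_trans B0) //.
  by rewrite -eqED subset_leq_card.
by rewrite (expand _ _ _ x0D) // (expand _ _ _ y0D').
Qed.

Lemma npartitions_ordS m n t :
  npartitions m [set: 'I_n.+1] t.+1 =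
    \sum_(i < m) 'C(n, i) * npartitions m [set: 'I_(n - i)] t.
Proof.
pose F s := npartitions m [set: 'I_(n.+1 - s)] t.
rewrite (npartitionsS _ _ (in_setT ord0)).
rewrite (eq_bigr (fun B : {set 'I_n.+1} => F #|B|)).
  by rewrite (sum_blocks_by_card _ F (in_setT ord0)) cardsT card_ord.
move=> B /and3P[_ BD _]; apply: eq_npartitions.
by rewrite cardsD (setIidPr BD) !cardsT !card_ord.
Qed.

Lemma ffactSn n k : n.+1 ^_ k = n ^_ k + k * n ^_ k.-1.
Proof.
case: k => [|k] //=; rewrite -!bin_ffact binS factS mulnDl.
by congr (_ + _); apply: mulnCA.
Qed.

Lemma Sm_npartitions m N k r :
  Sm m N k r = npartitions m [set: 'I_N] (r + k.-1) * (r + k.-1) ^_ k.-1.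
Proof.
set t := r + k.-1; rewrite /Sm -sum1_card.
have -> : \sum_(x in [pred x | labelled_bpart m N k r x]) 1 =
    \sum_(P | bpartition m [set: 'I_N] t P)
      \sum_(g in [set g : {ffun 'I_k.-1 -> _} in ffun_on P | injectiveb g]) 1.
  rewrite pair_big_dep; apply: eq_bigl => -[P g].
  by rewrite !inE /labelled_bpart /bpartition /= -!andbA (andbC (injectiveb g)).
rewrite /npartitions -sum1dep_card big_distrl /=.
apply: eq_bigr => P /and3P[_ _ /eqP cardP].
by rewrite sum1_card card_inj_ffuns_on card_ord cardP mul1n.
Qed.

Theorem mainTheorem3 (n m k r : nat) :
  0 < n -> 0 < m -> 0 < k -> 0 < r ->
  Sm m n k r =
  \sum_(i < m) 'C(n - 1, i) *
     ((k - 1) * Sm m (n - i - 1) (k - 1) r + Sm m (n - i - 1) k (r - 1)).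
Proof.
case: n m k r => [|n] [|m] [|k] [|r] // _ _ _ _.
rewrite Sm_npartitions /= addSn npartitions_ordS big_distrl /=.
apply: eq_bigr => i _.
rewrite subnAC !subn1 /= !Sm_npartitions /= ffactSn.
case: k => [|k]; first by rewrite !mul0n addn0 add0n mulnA.
rewrite addSnnS -mulnA [_ + k.+1 * _]addnC mulnDr.
by congr (_ * (_ + _)); apply: mulnCA.
Qed.
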